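(* Let $L>0$ be even, $A=\{x\in\{0,1\}^L: x_1+\dots+x_L=L/2\}$, $\mathrm{START}=(1,\dots,1,0,\dots,0)$ ($L/2$ ones followed by $L/2$ zeros) and $\mathrm{ACTIVE}=(0,\dots,0,1,\dots,1)$ ($L/2$ zeros followed by $L/2$ ones). There exist $\mu>0$ and a Boolean network with inputs $D$ with input vector $p=(p_1,\dots,p_L)$ and output vector $q=(q_1,q_2)$ such that the following holds for any initial condition of $D$ (at any initial time $\le 0$, with arbitrary inputs before time $0$). Let $M>1$ and let $p(0),\dots,p(M)$ be inputs with (i) $p(s)\in A$ for $0\le s\le M$, (ii) $p(0)=\mathrm{START}$, (iii) $p(s)\ne\mathrm{START}$ for $0<s\le M$. Let $j\ge0$ be such that $p(s)=\mathrm{ACTIVE}$ for $1\le s\le j$ and $p(j+1)\ne\mathrm{ACTIVE}$ (or $j=M$ if $p(1)=\dots=p(M)=\mathrm{ACTIVE}$). Then $q(s)=(1,0)$ for $\mu\le s\le\mu+j$ and $q(s)=(0,1)$ for $\mu+j<s\le\mu+M$. Moreover $D$ is cooperative, every node of its digraph has indegree and outdegree at most $2$, input variables have indegree $0$ and output variables have outdegree $0$. (The same holds after any time shift of the input sequence.)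
   Context: A Boolean network with inputs consists of finitely many Boolean variables, some designated as input variables whose values at each time are prescribed externally (arbitrarily), and the remaining (internal) variables, each updated simultaneously at each discrete time step by $x(t)=f_x(\text{values of all variables at time } t-1)$ for a Boolean function $f_x$; output variables are designated internal variables. It is cooperative if every update function $f_x$ is monotone nondecreasing with respect to the componentwise order (equivalently, expressible using only $\wedge$ and $\vee$). Its digraph has an arc from variable $y$ to internal variable $x$ iff $f_x$ actually depends on $y$. *)

From mathcomp Require Import all_boot.
Set Implicit Arguments. Unset Strict Implicit. Unset Printing Implicit Defensive.

(* Boolean network with L input variables ('I_L) and n internal variables ('I_n).
   A variable is either an input (inl i) or an internal variable (inr x). *)
Definition var (L n : nat) : finType := ('I_L + 'I_n)%type.

Definition state (L n : nat) := {ffun var L n -> bool}.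

Definition network (L n : nat) := 'I_n -> state L n -> bool.

Definition flip L n (s : state L n) (y : var L n) : state L n :=
  [ffun v => if v == y then ~~ s v else s v].

Definition depends L n (g : state L n -> bool) (y : var L n) : bool :=
  [exists s : state L n, g s != g (flip s y)].

Definition arc L n (f : network L n) (y : var L n) (x : 'I_n) : bool :=
  depends (f x) y.

(* indegree: inputs have no update function, hence indegree 0 *)
Definition indeg L n (f : network L n) (v : var L n) : nat :=
  match v with
  | inl _ => 0
  | inr x => #|[set y | arc f y x]|
  end.

Definition outdeg L n (f : network L n) (v : var L n) : nat :=
  #|[set x | arc f v x]|.

Definition cooperative L n (f : network L n) : Prop :=
  forall (x : 'I_n) (s s' : state L n),
    (forall v, s v ==> s' v) -> f x s ==> f x s'.

Definition full_state L n (p : {ffun 'I_L -> bool}) (x : {ffun 'I_n -> bool})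
  : state L n :=
  [ffun v => match v with inl i => p i | inr j => x j end].

Fixpoint traj L n (f : network L n) (p : nat -> {ffun 'I_L -> bool})
  (x0 : {ffun 'I_n -> bool}) (t : nat) : {ffun 'I_n -> bool} :=
  match t with
  | 0 => x0
  | t'.+1 => [ffun j => f j (full_state (p t') (traj f p x0 t'))]
  end.

Definition inA L (x : {ffun 'I_L -> bool}) : bool :=
  (\sum_(i < L) (x i : nat) == L %/ 2)%N.

Definition START L : {ffun 'I_L -> bool} := [ffun i : 'I_L => (i < L %/ 2)%N].
Definition ACTIVE L : {ffun 'I_L -> bool} := [ffun i : 'I_L => (L %/ 2 <= i)%N].

From Pilot Require Import Defs.
From mathcomp Require Import all_boot zify.
Set Implicit Arguments. Unset Strict Implicit. Unset Printing Implicit Defensive.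

(* For a vector with exactly H ones, being START amounts to
   "the first half is all ones" and equally to "the second half is all zeros"
   (dually for ACTIVE); see Section Halves.  A conjunction of H inputs is computed
   by a triangle of binary AND gates in which the gate at level l and position i
   holds the conjunction of the inputs i, ..., i + l (indices mod H): every gate
   is read by at most two gates and the apex sees the whole half H steps later
   (Section Window).  A fixed 16-gate circuit, the latch, turns the two detected
   signals into the answer six steps later (Section Latch).  Since the network
   must be monotone, the second output is produced by a dual copy of the whole
   circuit, with AND and OR exchanged and the other half of the input tested:
   by De Morgan it computes the negation of every signal of the first copy
   ([pol], below). *)

Definition pol (b z : bool) : bool := if b then z else ~~ z.

Lemma polK b : involutive (pol b).
Proof. by case: b => [] []. Qed.

Definition andor (o x y : bool) : bool := if o then x && y else x || y.

Lemma pol_andor b o x y : pol b (andor (pol b o) x y) = andor o (pol b x) (pol b y).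
Proof. by case: b o x y => [] [] [] []. Qed.

Lemma pol_andor_self b x y : pol b (andor b x y) = pol b x && pol b y.
Proof. by case: b x y => [] [] []. Qed.

Lemma andor_idem o x : andor o x x = x.
Proof. by case: o x => [] []. Qed.

Lemma sum_bool_compl n (F : 'I_n -> bool) :
  \sum_(k < n) (F k : nat) + \sum_(k < n) (~~ F k : nat) = n.
Proof.
rewrite -big_split /= -[RHS]card_ord -sum1_card.
by apply: eq_bigr => k _; case: (F k).
Qed.

Lemma sum_bool_all n (F : 'I_n -> bool) :
  (\sum_(k < n) (F k : nat) == n) = [forall k, F k].
Proof.
rewrite -[X in _ == X](sum_bool_compl F) -[X in X == _]addn0 eqn_add2l eq_sym sum_nat_eq0.
by apply: eq_forallb => k; case: (F k).
Qed.

Lemma sum_bool_none n (F : 'I_n -> bool) :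
  (\sum_(k < n) (F k : nat) == 0) = [forall k, ~~ F k].
Proof. by rewrite sum_nat_eq0; apply: eq_forallb => k; case: (F k). Qed.

Section Halves.
Variable H : nat.
Local Notation L := (H + H).

Definition half_in (fh : bool) (k : 'I_H) : 'I_L := unsplit (if fh then inl k else inr k).

(* ACTIVE is the complement of START, and complementation preserves A. *)
Definition compl_vec (q : {ffun 'I_L -> bool}) : {ffun 'I_L -> bool} := [ffun i => ~~ q i].

Lemma half_L : L %/ 2 = H.
Proof. by rewrite addnn divn2 doubleK. Qed.

Lemma START_halves (q : {ffun 'I_L -> bool}) :
  (q == START L) = [forall k, q (half_in true k)] && [forall k, ~~ q (half_in false k)].
Proof.
apply/eqP/andP => [-> | [/forallP q1 /forallP q2]].
  by split; apply/forallP => k; rewrite ffunE half_L /= ?ltn_ord // -leqNgt leq_addr.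
apply/ffunP => i; rewrite ffunE half_L -(splitK i).
case: (split i) => k /=; first by rewrite ltn_ord; apply: q1.
by rewrite ltnNge leq_addr; apply/negbTE/q2.
Qed.

Lemma ACTIVE_compl_vec (q : {ffun 'I_L -> bool}) : (q == ACTIVE L) = (compl_vec q == START L).
Proof.
apply/eqP/eqP => [-> | /ffunP E]; apply/ffunP => i; first by rewrite !ffunE ltnNge.
by move: (E i); rewrite !ffunE ltnNge => /(congr1 negb); rewrite !negbK.
Qed.

Lemma inA_halves (q : {ffun 'I_L -> bool}) :
  inA q -> [forall k, q (half_in true k)] = [forall k, ~~ q (half_in false k)].
Proof.
rewrite /inA half_L big_split_ord /= -sum_bool_all -sum_bool_none => /eqP.
set a := \sum_(k < H) _; set c := \sum_(k < H) _ => Eac.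
by apply/eqP/eqP; lia.
Qed.

Lemma inA_compl_vec (q : {ffun 'I_L -> bool}) : inA q -> inA (compl_vec q).
Proof.
rewrite /inA half_L => /eqP Eq.
rewrite (eq_bigr (fun i => ~~ q i : nat)) => [|i _]; last by rewrite ffunE.
by rewrite -(eqn_add2l H) -{1}Eq sum_bool_compl.
Qed.

(* The two START tests computed by the two copies of the network. *)
Lemma inA_START b (q : {ffun 'I_L -> bool}) :
  inA q -> [forall k, pol b (q (half_in b k))] = (q == START L).
Proof.
move=> qA; rewrite START_halves -(inA_halves qA) andbb.
by case: b; rewrite -?(inA_halves qA).
Qed.

Lemma inA_ACTIVE b (q : {ffun 'I_L -> bool}) :
  inA q -> [forall k, pol b (q (half_in (~~ b) k))] = (q == ACTIVE L).
Proof.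
move=> qA; rewrite ACTIVE_compl_vec -(inA_START (~~ b) (inA_compl_vec qA)).
by apply: eq_forallb => k; rewrite ffunE; case: b; rewrite /= ?negbK.
Qed.
End Halves.

Section Window.
Variable n : nat.

Definition all_window (q : 'I_n -> bool) (i : 'I_n) (l : nat) : bool :=
  [forall m : 'I_l.+1, q (iter m (@ordS n) i)].

Lemma all_windowP (q : 'I_n -> bool) i l :
  reflect (forall m, m <= l -> q (iter m (@ordS n) i)) (all_window q i l).
Proof.
apply: (iffP forallP) => [W m lm | W m]; last exact: W (ltn_ord m).
exact: W (Ordinal (lm : m < l.+1)).
Qed.

Lemma all_window0 (q : 'I_n -> bool) i : all_window q i 0 = q i.
Proof. by apply/all_windowP/idP => [W | qi [|m] //]; apply: W 0 _. Qed.

Lemma all_window_S (q : 'I_n -> bool) i l :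
  all_window q i l.+1 = all_window q i l && all_window q (ordS i) l.
Proof.
apply/all_windowP/andP => [W | [/all_windowP W0 /all_windowP W1]].
  split; apply/all_windowP => m lm; last rewrite -iterSr; apply: W => //.
  exact: leqW.
by case=> [|m] lm; [apply: W0 | rewrite iterSr; apply: W1].
Qed.

Variables (d : nat) (q : nat -> 'I_n -> bool) (V : nat -> nat -> 'I_n -> bool).
Hypothesis V_leaf : forall t i, V t.+1 0 i = q t i.
Hypothesis V_node : forall t l i, l < d -> V t.+1 l.+1 i = V t l i && V t l (ordS i).

Lemma window_tree l t i : l <= d -> V (t + l.+1) l i = all_window (q t) i l.
Proof.
elim: l i => [|l IH] i ld; first by rewrite addn1 V_leaf all_window0.
by rewrite addnS V_node // !IH ?(ltnW ld) // all_window_S.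
Qed.
End Window.

Lemma iter_ordS0 n m : m < n.+1 -> val (iter m (@ordS n.+1) ord0) = m.
Proof.
elim: m => [//|m IH] lt_m; rewrite iterS /= IH ?modn_small //; exact: ltnW.
Qed.

Lemma all_window_full n (q : 'I_n.+1 -> bool) :
  all_window q ord0 n = [forall k, q k].
Proof.
apply/all_windowP/forallP => [W k | W m _]; last exact: W.
have -> : k = iter k (@ordS n.+1) ord0 by apply: val_inj; rewrite iter_ordS0.
by apply: W; rewrite -ltnS.
Qed.

Record bgate (S : Type) := BGate { gop : bool; gin1 : S; gin2 : S }.

(* Its wires are the START and ACTIVE signals and its own gates
   0..15.  Gates 0-6 delay START, 7-8 delay ACTIVE, 9 is "START or ACTIVE", 10
   is "START now or one step ago", 11-12 form a loop of length two storing two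
   interleaved memories (even and odd times) that ACTIVE has held since START,
   and 13-15 conjoin two consecutive memories into the answer. *)
Inductive wire := WStart | WActive | WGate of nat.

Definition latch_gate (g : nat) : bgate wire :=
  match g with
  | 0 | 1 => BGate true WStart WStart
  | 2 | 3 => BGate true (WGate 1) (WGate 1)
  | 4 => BGate true (WGate 0) (WGate 0)
  | 5 => BGate true (WGate 4) (WGate 4)
  | 6 => BGate true (WGate 5) (WGate 5)
  | 7 => BGate true WActive WActive
  | 8 => BGate true (WGate 7) (WGate 7)
  | 9 => BGate false (WGate 3) (WGate 8)
  | 10 => BGate false (WGate 0) (WGate 2)
  | 11 => BGate false (WGate 10) (WGate 12)
  | 12 => BGate true (WGate 11) (WGate 9)
  | 13 => BGate true (WGate 12) (WGate 12)
  | 14 => BGate false (WGate 13) (WGate 6)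
  | _ => BGate true (WGate 13) (WGate 14)
  end.

Definition wire_val (w : nat -> bool) (x y : bool) (v : wire) : bool :=
  match v with WStart => x | WActive => y | WGate k => w k end.

Definition latch_eval (g : nat) (w : nat -> bool) (x y : bool) : bool :=
  andor (gop (latch_gate g)) (wire_val w x y (gin1 (latch_gate g)))
        (wire_val w x y (gin2 (latch_gate g))).

Definition wire_eqb (v w : wire) : bool :=
  match v, w with
  | WStart, WStart | WActive, WActive => true
  | WGate k, WGate k' => k == k'
  | _, _ => false
  end.

Lemma wire_eqb_refl w : wire_eqb w w.
Proof. by case: w => /=. Qed.

Definition wire_ok (w : wire) : bool := if w is WGate k then k < 16 else true.

Lemma latch_gate_ok g : wire_ok (gin1 (latch_gate g)) && wire_ok (gin2 (latch_gate g)).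
Proof. by do 15!case: g => [//|g]. Qed.

Definition latch_readers (w : wire) : seq nat :=
  [seq g <- iota 0 16 | wire_eqb (gin1 (latch_gate g)) w || wire_eqb (gin2 (latch_gate g)) w].

Lemma latch_readers_in1 g : g < 16 -> g \in latch_readers (gin1 (latch_gate g)).
Proof. by move=> lt_g; rewrite mem_filter wire_eqb_refl mem_iota. Qed.

Lemma latch_readers_in2 g : g < 16 -> g \in latch_readers (gin2 (latch_gate g)).
Proof. by move=> lt_g; rewrite mem_filter wire_eqb_refl orbT mem_iota. Qed.

Lemma latch_fanout w : size (latch_readers w) <= 2.
Proof. by case: w => // k; do 16!case: k => [//|k]. Qed.

Section Latch.
Variables (W : nat -> nat -> bool) (X Y : nat -> bool) (B M j : nat).
Hypothesis latch_step : forall t g, g < 16 -> W t.+1 g = latch_eval g (W t) (X t) (Y t).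
Hypothesis X_start : forall k, k <= M -> X (B + k) = (k == 0).
Hypothesis Y_active : forall k, 0 < k <= j -> Y (B + k).
Hypothesis Y_stop : j < M -> Y (B + j.+1) = false.

Local Ltac unroll := repeat (rewrite latch_step // /latch_eval /=).

Lemma start_delayed k : k <= M -> W (B + k).+4 6 = (k == 0).
Proof. by move=> kM; unroll; rewrite !andbb X_start. Qed.

Lemma start_or_active k : k <= M -> W (B + k).+3 9 = (k == 0) || Y (B + k).
Proof. by move=> kM; unroll; rewrite !andbb X_start. Qed.

Lemma recent_start k : k <= M -> W (B + k).+2 10 = (k <= 1).
Proof.
move=> kM; unroll; rewrite !andbb X_start //.
case: k kM => [//|k] kM; rewrite addnS; unroll.
by rewrite andbb X_start ?ltnS ?leqn0 // ltnW.
Qed.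

(* The memory gate; the loop 11-12 updates it every other step. *)
Let memo k := W (B + k).+4 12.

Lemma memory_eq k : k <= M ->
  memo k = ((k <= 1) || W (B + k).+2 12) && ((k == 0) || Y (B + k)).
Proof.
move=> kM; rewrite /memo latch_step // /latch_eval /= start_or_active //.
by rewrite latch_step // /latch_eval /= recent_start.
Qed.

Lemma memory_pair k : 0 < k <= M -> memo k && memo k.-1 = (k <= j).
Proof.
elim: k => [//|[|k] IH] /andP [_ kM].
  rewrite !memory_eq ?(ltnW kM) //= andbT.
  have [j0 | j_gt0] := posnP j; last by rewrite Y_active ?j_gt0.
  by move: Y_stop; rewrite j0 => ->.
rewrite memory_eq //=.
have -> : (B + k.+2).+2 = (B + k).+4 by rewrite !addnS.
rewrite -/(memo k) andbC andbA IH ?(ltnW kM) //=.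
case: (ltnP k.+1 j) => [k1j | jk1].
  by rewrite Y_active ?k1j ?(ltnW k1j).
rewrite andbC.
have [jk | jE] : j <= k \/ j = k.+1 by lia.
  by rewrite ltnNge jk andbF.
by rewrite -jE Y_stop // jE.
Qed.

Lemma latch_output k : k <= M -> W (B + k + 6) 15 = (k <= j).
Proof.
move=> kM; have -> : B + k + 6 = (B + k).+4.+2 by rewrite addnC.
have w13 t : W t.+1 13 = W t 12 by rewrite latch_step // /latch_eval /= andbb.
have w14 t : W t.+1 14 = W t 13 || W t 6 by rewrite latch_step.
have w15 t : W t.+1 15 = W t 13 && W t 14 by rewrite latch_step.
rewrite w15 w14 !w13 start_delayed // -/(memo k).
case: k kM => [|k] kM; first by rewrite orbT memory_eq.
by rewrite orbF addnS -/(memo k) memory_pair.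
Qed.
End Latch.

Lemma depends_binary L n (g : state L n -> bool) (h : bool -> bool -> bool) y1 y2 y :
  (forall s, g s = h (s y1) (s y2)) -> depends g y -> (y == y1) || (y == y2).
Proof.
move=> gE /existsP [s]; rewrite !gE !ffunE; apply: contraNT.
by rewrite negb_or => /andP [/negPf y1y /negPf y2y]; rewrite ![_ == y]eq_sym y1y y2y eqxx.
Qed.

Section GateNetwork.
Variables (L : nat) (N : finType) (gate : N -> bgate ('I_L + N)).

Definition net_var (y : 'I_L + N) : var L #|N| :=
  match y with inl k => inl k | inr x => inr (enum_rank x) end.

Definition var_src (v : var L #|N|) : 'I_L + N :=
  match v with inl k => inl k | inr x => inr (enum_val x) end.

Lemma net_varK : cancel net_var var_src.
Proof. by case=> [k|x] //=; rewrite enum_rankK. Qed.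

Definition gate_net : network L #|N| := fun x s =>
  let G := gate (enum_val x) in andor (gop G) (s (net_var (gin1 G))) (s (net_var (gin2 G))).

Lemma gate_net_cooperative : cooperative gate_net.
Proof.
move=> x s s' le_ss'; rewrite /gate_net.
move: (le_ss' (net_var (gin1 (gate (enum_val x))))) (le_ss' (net_var (gin2 (gate (enum_val x))))).
by case: (gop _); do 4!case: (_ _ (net_var _)).
Qed.

Lemma gate_net_arc v x : Defs.arc gate_net v x ->
  (v == net_var (gin1 (gate (enum_val x)))) || (v == net_var (gin2 (gate (enum_val x)))).
Proof. exact: depends_binary. Qed.

Lemma gate_net_indeg v : indeg gate_net v <= 2.
Proof.
case: v => [//|x] /=.
set y1 := net_var (gin1 (gate (enum_val x))); set y2 := net_var (gin2 (gate (enum_val x))).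
apply: leq_trans (subset_leq_card (_ : _ \subset [set y1; y2])) _.
  by apply/subsetP => v; rewrite !inE => /gate_net_arc.
by rewrite cards2; case: (_ != _).
Qed.

Lemma gate_net_outdeg (readers : 'I_L + N -> seq N) :
  (forall x, x \in readers (gin1 (gate x)) /\ x \in readers (gin2 (gate x))) ->
  forall v, outdeg gate_net v <= size (readers (var_src v)).
Proof.
move=> readersP v; rewrite /outdeg; set R := map enum_rank (readers (var_src v)).
apply: leq_trans (subset_leq_card (_ : _ \subset [set x in R])) _.
  apply/subsetP => x; rewrite !inE -[x]enum_valK (mem_map enum_rank_inj).
  case: (readersP (enum_val x)) => r1 r2.
  by move/gate_net_arc => /orP [] /eqP ->; rewrite net_varK enum_valK.
by rewrite cardsE (leq_trans (card_size _)) // size_map.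
Qed.

Variables (p : nat -> {ffun 'I_L -> bool}) (x0 : {ffun 'I_#|N| -> bool}).

Definition node_val t (x : N) : bool := traj gate_net p x0 t (enum_rank x).

Definition src_val t (y : 'I_L + N) : bool :=
  match y with inl k => p t k | inr x => node_val t x end.

Lemma node_val_step t x : node_val t.+1 x =
  andor (gop (gate x)) (src_val t (gin1 (gate x))) (src_val t (gin2 (gate x))).
Proof.
rewrite /node_val /= ffunE /gate_net enum_rankK.
by case: (gin1 _) => [k|z]; case: (gin2 _) => [k'|z']; rewrite !ffunE.
Qed.
End GateNetwork.

(* The network for L = H + H, H = h + 1.  Tree node (fh, op, l, i) is the gate
   at level l and position i of the op-triangle over half fh; latch node (b, g)
   is gate g of the latch copy of polarity b, whose START and ACTIVE wires are
   the apices below (AND triangles for b, OR triangles for ~~ b). *)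
Section Network.
Variable h : nat.
Local Notation H := h.+1.
Local Notation L := (H + H).

Definition node : finType := ((bool * bool * 'I_H * 'I_H) + (bool * 'I_16))%type.
Definition tree_node fh op (l i : 'I_H) : node := inl (fh, op, l, i).
Definition latch_node b (g : 'I_16) : node := inr (b, g).

Definition start_root b : node := tree_node b b ord_max ord0.
Definition active_root b : node := tree_node (~~ b) b ord_max ord0.

Definition copy_src b (w : wire) : 'I_L + node :=
  match w with
  | WStart => inr (start_root b)
  | WActive => inr (active_root b)
  | WGate k => inr (latch_node b (inord k))
  end.

Definition tree_gate fh op (l i : 'I_H) : bgate ('I_L + node) :=
  if l : nat is l'.+1
  then BGate op (inr (tree_node fh op (inord l') i)) (inr (tree_node fh op (inord l') (ordS i)))
  else BGate op (inl (half_in fh i)) (inl (half_in fh i)).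

Definition latch_copy_gate b (g : nat) : bgate ('I_L + node) :=
  let G := latch_gate g in BGate (pol b (gop G)) (copy_src b (gin1 G)) (copy_src b (gin2 G)).

Definition net_gate (x : node) : bgate ('I_L + node) :=
  match x with
  | inl (fh, op, l, i) => tree_gate fh op l i
  | inr (b, g) => latch_copy_gate b g
  end.

Definition half_of (k : 'I_L) : bool * 'I_H :=
  match split k with inl i => (true, i) | inr i => (false, i) end.

Definition copy_readers b (w : wire) : seq node :=
  [seq latch_node b (inord g) | g <- latch_readers w].

Definition readers (y : 'I_L + node) : seq node :=
  match y with
  | inl k =>
      let: (fh, i) := half_of k in [:: tree_node fh true ord0 i; tree_node fh false ord0 i]
  | inr (inl (fh, op, l, i)) =>
      if l < h
      then [:: tree_node fh op (inord l.+1) i; tree_node fh op (inord l.+1) (ord_pred i)]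
      else if i == ord0 then copy_readers op (if fh == op then WStart else WActive) else [::]
  | inr (inr (b, g)) => copy_readers b (WGate g)
  end.

Lemma half_of_half_in fh i : half_of (half_in fh i) = (fh, i).
Proof. by rewrite /half_of /half_in unsplitK; case: fh. Qed.

Lemma readers_copy_src b w : wire_ok w -> readers (copy_src b w) = copy_readers b w.
Proof. by case: w => [||k] /= ok_k; rewrite ?ltnn ?eqxx ?inordK //; case: b. Qed.

Lemma readersP x : x \in readers (gin1 (net_gate x)) /\ x \in readers (gin2 (net_gate x)).
Proof.
case: x => [[[[fh op] [[|l] lt_l]] i] | [b g]] /=.
- have -> : Ordinal lt_l = ord0 by apply: val_inj.
  by rewrite half_of_half_in; case: op; rewrite !inE eqxx ?orbT.
- have lt_lh : l < h by [].
  have -> : Ordinal lt_l = inord l.+1 by apply: val_inj; rewrite /= inordK.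
  by rewrite !inordK ?(ltnW lt_l) // lt_lh ordSK !inE !eqxx ?orbT.
- case: (andP (latch_gate_ok g)) => ok1 ok2.
  rewrite /latch_copy_gate /= !readers_copy_src //.
  have gE : latch_node b g = latch_node b (inord g) by rewrite inord_val.
  rewrite -[inr (b, g)]/(latch_node b g) gE.
  by split; apply: map_f; [apply: latch_readers_in1 | apply: latch_readers_in2].
Qed.

Lemma readers_size y : size (readers y) <= 2.
Proof.
case: y => [k | [[[[fh op] l] i] | [b g]]] /=; rewrite ?size_map ?latch_fanout //.
- by case: (half_of k).
- by case: ifP => // _; case: ifP => // _; rewrite size_map latch_fanout.
Qed.

Definition net : network L #|node| := gate_net net_gate.

Definition out_var b : 'I_#|node| := enum_rank (latch_node b (inord 15)).

Lemma net_degrees v : indeg net v <= 2 /\ outdeg net v <= 2.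
Proof.
split; first exact: gate_net_indeg.
exact: leq_trans (gate_net_outdeg readersP v) (readers_size _).
Qed.

Lemma out_outdeg b : outdeg net (inr (out_var b)) = 0.
Proof.
apply/eqP; rewrite -leqn0; apply: leq_trans (gate_net_outdeg readersP _) _.
by rewrite /= enum_rankK /= inordK.
Qed.

Section Dynamics.
Variables (p : nat -> {ffun 'I_L -> bool}) (x0 : {ffun 'I_#|node| -> bool}).
Local Notation value := (node_val net_gate p x0).

Lemma tree_root fh op t :
  pol op (value (t + H) (tree_node fh op ord_max ord0)) =
  [forall k, pol op (p t (half_in fh k))].
Proof.
pose V t l i := pol op (value t (tree_node fh op (inord l) i)).
have leaf t' i : V t'.+1 0 i = pol op (p t' (half_in fh i)).
  by rewrite /V node_val_step /= /tree_gate inordK //= andor_idem.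
have node t' l i : l < h -> V t'.+1 l.+1 i = V t' l i && V t' l (ordS i).
  by move=> lt_lh; rewrite /V node_val_step /= /tree_gate inordK //= pol_andor_self.
have -> : ord_max = inord h :> 'I_H by apply: val_inj; rewrite /= inordK.
by rewrite -/(V _ h ord0) (window_tree leaf node) // all_window_full.
Qed.

Lemma start_root_value b t :
  inA (p t) -> pol b (value (t + H) (start_root b)) = (p t == START L).
Proof. by move=> pA; rewrite tree_root inA_START. Qed.

Lemma active_root_value b t :
  inA (p t) -> pol b (value (t + H) (active_root b)) = (p t == ACTIVE L).
Proof. by move=> pA; rewrite tree_root inA_ACTIVE. Qed.

Lemma latch_copy_step b t g : g < 16 ->
  pol b (value t.+1 (latch_node b (inord g))) =
  latch_eval g (fun k => pol b (value t (latch_node b (inord k))))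
             (pol b (value t (start_root b))) (pol b (value t (active_root b))).
Proof.
move=> lt_g; rewrite node_val_step /= inordK // pol_andor /latch_eval.
by case: (gin1 _) => [||k]; case: (gin2 _) => [||k'].
Qed.

Lemma net_output b T M j :
  (forall s, s <= M -> inA (p (T + s))) ->
  p T = START L -> (forall s, 0 < s <= M -> p (T + s) <> START L) ->
  j <= M -> (forall s, 1 <= s <= j -> p (T + s) = ACTIVE L) ->
  (j < M -> p (T + j.+1) <> ACTIVE L) ->
  forall k, k <= M ->
  pol b (value (T + (H + 6 + k)) (latch_node b (inord 15))) = (k <= j).
Proof.
move=> pA pT pS jM pact pstop k kM.
have -> : T + (H + 6 + k) = T + H + k + 6 by lia.
apply: (latch_output (W := fun t g => pol b (value t (latch_node b (inord g))))
  (X := fun t => pol b (value t (start_root b)))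
  (Y := fun t => pol b (value t (active_root b))) (M := M) (j := j)) => //.
- by move=> t g; apply: latch_copy_step.
- move=> k' k'M; rewrite /= addnAC start_root_value; last exact: pA.
  by case: k' k'M => [|k'] k'M; [rewrite addn0 pT eqxx | apply/eqP; apply: pS].
- move=> k' /andP [k'0 k'j].
  rewrite /= addnAC active_root_value; last exact: pA (leq_trans k'j jM).
  by rewrite pact ?k'0 ?eqxx.
- by move=> jM'; rewrite /= addnAC active_root_value; [apply/eqP; apply: pstop | apply: pA].
Qed.
End Dynamics.
End Network.

Lemma even_halves L : 0 < L -> ~~ odd L -> exists h, L = h.+1 + h.+1.
Proof.
move=> L_gt0 L_even.
have L2 : L = (L./2).*2 by rewrite -{1}[L]odd_double_half (negbTE L_even).
exists (L./2).-1; rewrite addnn prednK //.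
by rewrite -double_gt0 -L2.
Qed.

Theorem lemma6 (L : nat) (HL : 0 < L) (Heven : ~~ odd L) :
  exists (mu n : nat) (f : network L n) (q1 q2 : 'I_n),
    0 < mu /\
    cooperative f /\
    (forall v : var L n, indeg f v <= 2 /\ outdeg f v <= 2) /\
    (forall i : 'I_L, indeg f (inl i) = 0) /\
    outdeg f (inr q1) = 0 /\ outdeg f (inr q2) = 0 /\
    forall (x0 : {ffun 'I_n -> bool}) (p : nat -> {ffun 'I_L -> bool})
           (T M : nat),
      1 < M ->
      (forall s, s <= M -> inA (p (T + s))) ->
      p T = START L ->
      (forall s, 0 < s <= M -> p (T + s) <> START L) ->
      forall j : nat, j <= M ->
        (forall s, 1 <= s <= j -> p (T + s) = ACTIVE L) ->
        (j < M -> p (T + j.+1) <> ACTIVE L) ->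
        (forall s, mu <= s <= mu + j ->
           traj f p x0 (T + s) q1 = true /\ traj f p x0 (T + s) q2 = false) /\
        (forall s, mu + j < s <= mu + M ->
           traj f p x0 (T + s) q1 = false /\ traj f p x0 (T + s) q2 = true).
Proof.
have [h ->] := even_halves HL Heven.
exists (h.+1 + 6), #|node h|, (@net h), (@out_var h true), (@out_var h false).
split; first by [].
split; first exact: gate_net_cooperative.
split; first exact: net_degrees.
split; first by [].
split; first exact: out_outdeg.
split; first exact: out_outdeg.
move=> x0 p T M _ pA pT pS j jM pact pstop.
have out_at b s : h.+1 + 6 <= s <= h.+1 + 6 + M ->
    traj (@net h) p x0 (T + s) (@out_var h b) = pol b (s - (h.+1 + 6) <= j).
  move=> /andP [lo hi]; have kM : s - (h.+1 + 6) <= M by rewrite leq_subLR.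
  by rewrite -(net_output x0 b pA pT pS jM pact pstop kM) polK subnKC.
split=> s /andP [lo hi].
- have kj : s - (h.+1 + 6) <= j by rewrite leq_subLR.
  have range : h.+1 + 6 <= s <= h.+1 + 6 + M by rewrite lo (leq_trans hi) ?leq_add2l.
  by rewrite !out_at // kj.
- have jk : j < s - (h.+1 + 6) by rewrite ltn_subRL.
  have range : h.+1 + 6 <= s <= h.+1 + 6 + M.
    by rewrite hi andbT (leq_trans (leq_addr j _) (ltnW lo)).
  by rewrite !out_at // leqNgt jk.
Qed.
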